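(* Fix constants $\mu_1,\ldots,\mu_M\ge 0$ and $P_1^{\rm ST},\ldots,P_K^{\rm ST}>0$. For a channel realization $\boldsymbol{\alpha}$ consider the problem $$\max_{p_1,\ldots,p_K}\ \log\Big(1+\sum_{k=1}^K h_kp_k\Big)-\sum_{m=1}^M\mu_m\sum_{k=1}^K g_{km}p_k\quad\text{s.t.}\quad 0\le p_k\le P_k^{\rm ST}\ \ \forall k.$$ For almost every realization $\boldsymbol{\alpha}$: if $(p_1^*,\ldots,p_K^* )$ is an optimal solution and $i,j$ are users with $p_i^*>0$ and $p_j^*=0$, then $$\frac{h_i}{\sum_{m=1}^M\mu_m g_{im}}\ \ge\ \frac{h_j}{\sum_{m=1}^M\mu_m g_{jm}}.$$
   Context: $\boldsymbol{\alpha}=(h_1,\ldots,h_K,g_{11},\ldots,g_{KM})$ is a random vector of nonnegative channel power gains ($h_k$: secondary user $k$ to secondary base station; $g_{km}$: secondary user $k$ to primary receiver $m$) with a continuous, differentiable joint cumulative distribution function, the $h_k$'s and $g_{km}$'s being independent. Convention: $x/0=+\infty$ for $x>0$. *)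

From HB Require Import structures.
From mathcomp Require Import all_boot all_order all_algebra.
From mathcomp Require Import all_classical all_reals all_analysis.
Set Implicit Arguments. Unset Strict Implicit. Unset Printing Implicit Defensive.
Import Order.TTheory GRing.Theory Num.Theory.
Import numFieldNormedType.Exports.
Local Open Scope classical_set_scope.
Local Open Scope ring_scope.

(* Mutual independence of a finite family of real random variables:
   product rule for every choice of Borel sets (sub-families via B i = setT). *)
Definition mutually_independent (R : realType) (d : measure_display)
  (T : measurableType d) (P : probability T R) (I : finType) (X : I -> T -> R) :=
  forall B : I -> set R, (forall i, measurable (B i)) ->
    P (\bigcap_(i in [set: I]) (X i @^-1` B i)) = (\prod_(i : I) P (X i @^-1` B i))%E.

Definition joint_cdf (R : realType) (d : measure_display) (T : measurableType d)
  (P : probability T R) (N : nat) (X : 'I_N -> T -> R) (x : 'rV[R]_N) : R :=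
  fine (P [set w | forall i : 'I_N, X i w <= x ord0 i]).

Definition chan_h (R : Type) (T : Type) (K M : nat)
  (alpha : 'I_(K + K * M) -> T -> R) (k : 'I_K) : T -> R :=
  alpha (lshift (K * M) k).
Definition chan_g (R : Type) (T : Type) (K M : nat)
  (alpha : 'I_(K + K * M) -> T -> R) (k : 'I_K) (m : 'I_M) : T -> R :=
  alpha (rshift K (mxvec_index k m)).

Definition objective (R : realType) (K M : nat) (h : 'I_K -> R)
  (g : 'I_K -> 'I_M -> R) (mu : 'I_M -> R) (p : 'I_K -> R) : R :=
  ln (1 + \sum_(k < K) h k * p k) - \sum_(m < M) mu m * \sum_(k < K) g k m * p k.

Definition feasible (R : realType) (K : nat) (PST : 'I_K -> R) (p : 'I_K -> R) :=
  forall k, 0 <= p k <= PST k.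

Definition is_optimal (R : realType) (K M : nat) (h : 'I_K -> R)
  (g : 'I_K -> 'I_M -> R) (mu : 'I_M -> R) (PST : 'I_K -> R) (p : 'I_K -> R) :=
  feasible PST p /\
  forall q, feasible PST q -> objective h g mu q <= objective h g mu p.

Definition eratio (R : realType) (x y : R) : \bar R :=
  if y == 0 then +oo%E else (x / y)%:E.

From mathcomp Require Import lra.
From HB Require Import structures.
From mathcomp Require Import all_boot all_order all_algebra.
From mathcomp Require Import all_classical all_reals all_analysis.
Set Implicit Arguments. Unset Strict Implicit. Unset Printing Implicit Defensive.
Import Order.TTheory GRing.Theory Num.Theory.
Import numFieldNormedType.Exports.
Local Open Scope classical_set_scope.
Local Open Scope ring_scope.

(* An optimal allocation with p_i > 0 and p_j = 0 cannot be improved by moving a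
   small amount x of power from user i to user j at the rate h_i x = h_j y that
   keeps the rate term log(1 + sum_k h_k p_k) unchanged; hence the interference
   cost c_i x of the removed power is at most the cost c_j y of the added one,
   i.e. c_i h_j <= h_i c_j, which is the claimed ratio inequality provided
   h_i, h_j > 0.  Positivity of every channel gain holds almost surely: since
   the gains are nonnegative and the joint CDF is continuous, the CDF vanishes
   wherever one coordinate is 0, so P(h_k <= 0) = 0. *)

Lemma continuous_eq0_shift (R : realType) (N : nat) (f : 'rV[R]_N -> R)
    (x v : 'rV[R]_N) :
  continuous f -> (forall e : R, 0 < e -> f (x - e *: v) = 0) -> f x = 0.
Proof.
move=> fc f0.
have shift_cvg : (fun e : R => x - e *: v) @ 0^'+ --> x.
  apply: cvg_within_filter.
  have : (fun e : R => x - e *: v) @ (0 : R) --> x - 0 *: v.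
    by apply: cvgB; [exact: cvg_cst | apply: cvgZ; [exact: cvg_id | exact: cvg_cst]].
  by rewrite scale0r subr0.
have f_cvg : f (x - e *: v) @[e --> 0^'+] --> f x := cvg_comp _ _ shift_cvg (fc x).
have f_cvg0 : f (x - e *: v) @[e --> 0^'+] --> (0 : R).
  apply: cvg_near_cst; near=> e; apply: f0; near: e; exact: nbhs_right_gt.
exact: (cvg_unique _ f_cvg f_cvg0).
Unshelve. all: by end_near.
Qed.

Section JointCdf.
Variables (R : realType) (d : measure_display) (T : measurableType d).
Variables (P : probability T R) (N : nat) (X : 'I_N -> T -> R).
Hypothesis mX : forall i, measurable_fun setT (X i).
Hypothesis X_ge0 : forall i w, 0 <= X i w.
Hypothesis cdf_cont : continuous (joint_cdf P X).

Let cdf_event (x : 'rV[R]_N) := [set w | forall i, X i w <= x ord0 i].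

Let measurable_cdf_event x : measurable (cdf_event x).
Proof.
have -> : cdf_event x = \bigcap_(i in [set: 'I_N]) (X i @^-1` `]-oo, x ord0 i]).
  by apply/seteqP; split => w /= Hw i; [move=> _ /=; rewrite in_itv /= Hw
                                       | have := Hw i I; rewrite /= in_itv].
apply: fin_bigcap_measurable; first exact: finite_finset.
by move=> i _; rewrite -(setTI (X i @^-1` _)); apply: mX => //; exact: measurable_itv.
Qed.

Let cdf_event_null (x : 'rV[R]_N) (a : 'I_N) :
  x ord0 a = 0 -> P (cdf_event x) = 0%E.
Proof.
move=> xa0.
have cdf0 : joint_cdf P X x = 0.
  apply: (@continuous_eq0_shift _ _ _ x (delta_mx 0 a) cdf_cont) => e e0.
  rewrite /joint_cdf (_ : [set w | _] = set0) ?measure0 //.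
  apply/seteqP; split => w //= /(_ a).
  rewrite !mxE xa0 !eqxx /= mulr1 sub0r => Xa_le.
  by have := le_trans (X_ge0 a w) Xa_le; rewrite oppr_ge0 leNgt e0.
have Pfin : P (cdf_event x) \is a fin_num.
  by rewrite ge0_fin_numE // (le_lt_trans (probability_le1 P _)) ?ltry.
by rewrite -[P _]fineK // -[fine _]/(joint_cdf P X x) cdf0.
Qed.

Lemma ae_coord_gt0 (a : 'I_N) : \forall w \ae P, 0 < X a w.
Proof.
pose x (n : nat) : 'rV[R]_N := \row_i (if i == a then 0 else n%:R).
apply: (@negligibleS _ _ _ _ (\bigcup_n cdf_event (x n))).
  move=> w /= /negP; rewrite -leNgt => Xa_le0.
  exists (Num.truncn (\sum_i X i w)).+1 => // i; rewrite mxE.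
  case: eqP => [->//|_]; apply/ltW/(le_lt_trans _ (truncnS_gt _)).
  by rewrite (bigD1 i) //= lerDl sumr_ge0.
apply: negligible_bigcup => n; apply/negligibleP => //.
by apply: (@cdf_event_null _ a); rewrite mxE eqxx.
Qed.

End JointCdf.

Definition transfer (R : pzRingType) (K : nat) (p : 'I_K -> R) (i j : 'I_K)
    (x y : R) (k : 'I_K) : R :=
  p k - (k == i)%:R * x + (k == j)%:R * y.

Lemma sum_mul_delta (R : pzRingType) (K : nat) (a : 'I_K -> R) (i : 'I_K) :
  \sum_(k < K) a k * (k == i)%:R = a i.
Proof.
by rewrite (bigD1 i) //= eqxx mulr1 big1 ?addr0 // => k /negbTE ->; rewrite mulr0.
Qed.

Lemma sum_mul_transfer (R : pzRingType) (K : nat) (a p : 'I_K -> R) (i j : 'I_K)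
    (x y : R) :
  \sum_(k < K) a k * transfer p i j x y k =
  \sum_(k < K) a k * p k - a i * x + a j * y.
Proof.
under eq_bigr => k _ do rewrite /transfer mulrDr mulrBr !mulrA.
by rewrite big_split /= sumrB -!mulr_suml !sum_mul_delta.
Qed.

Lemma cost_transfer (R : comPzRingType) (K M : nat) (g : 'I_K -> 'I_M -> R)
    (mu : 'I_M -> R) (p : 'I_K -> R) (i j : 'I_K) (x y : R) :
  \sum_(m < M) mu m * \sum_(k < K) g k m * transfer p i j x y k =
  \sum_(m < M) mu m * \sum_(k < K) g k m * p k
  - (\sum_(m < M) mu m * g i m) * x + (\sum_(m < M) mu m * g j m) * y.
Proof.
under eq_bigr => m _ do rewrite sum_mul_transfer mulrDr mulrBr !mulrA.
by rewrite big_split /= sumrB -!mulr_suml.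
Qed.

Lemma feasible_transfer (R : realType) (K : nat) (PST p : 'I_K -> R) (i j : 'I_K)
    (x y : R) :
  feasible PST p -> i != j -> 0 <= x <= p i -> 0 <= y -> p j + y <= PST j ->
  feasible PST (transfer p i j x y).
Proof.
move=> fp ij /andP[x_ge0 x_le] y_ge0 pjy k; rewrite /transfer.
have [->|ki] := eqVneq k i.
  rewrite (negbTE ij) mul1r mul0r addr0 subr_ge0 x_le /=.
  by have /andP[_ /(le_trans _)->] := fp i; rewrite // gerBl.
have [->|kj] := eqVneq k j.
  rewrite mul0r subr0 mul1r pjy andbT.
  by have /andP[pj_ge0 _] := fp j; rewrite addr_ge0.
by rewrite !mul0r subr0 addr0; exact: fp.
Qed.

Lemma optimal_exchange (R : realType) (K M : nat) (h : 'I_K -> R)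
    (g : 'I_K -> 'I_M -> R) (mu : 'I_M -> R) (PST p : 'I_K -> R) (i j : 'I_K) :
  0 < h i -> 0 < h j -> 0 < PST j -> is_optimal h g mu PST p -> 0 < p i -> p j = 0 ->
  (\sum_(m < M) mu m * g i m) * h j <= h i * \sum_(m < M) mu m * g j m.
Proof.
move=> hi_gt0 hj_gt0 PSTj_gt0 [fp opt] pi_gt0 pj0.
set ci := \sum_(m < M) _; set cj := \sum_(m < M) _.
have ij : i != j by apply: contraTneq pi_gt0 => ->; rewrite pj0 ltxx.
pose x := Num.min (p i) (h j * PST j / h i).
pose y := x * h i / h j.
have x_gt0 : 0 < x by rewrite lt_min pi_gt0 /= divr_gt0 // mulr_gt0.
have hy : h j * y = h i * x by rewrite /y mulrC divfK ?gt_eqF // mulrC.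
have y_le : y <= PST j.
  rewrite /y ler_pdivrMr // mulrC -ler_pdivlMl // [X in _ <= X]mulrC.
  by rewrite [PST j * _]mulrC ge_min lexx orbT.
have fq : feasible PST (transfer p i j x y).
  apply: feasible_transfer => //; last by rewrite pj0 add0r.
  - by rewrite ltW //= ge_min lexx.
  - by rewrite /y divr_ge0 ?mulr_ge0 ?ltW.
have := opt _ fq; rewrite /objective sum_mul_transfer cost_transfer -/ci -/cj.
rewrite hy subrK lerD2l lerN2 -addrA lerDl addrC subr_ge0 /y mulrA ler_pdivlMr //.
by move=> ?; nra.
Qed.

Lemma eratio_le_cross (R : realType) (a b c e : R) :
  0 < a -> 0 <= b -> 0 <= e -> e * a <= c * b -> (eratio a b <= eratio c e)%E.
Proof.
move=> a_gt0 b_ge0 e_ge0 cross; rewrite /eratio.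
have [_|e_neq0] := eqVneq e 0; first by rewrite leey.
have e_gt0 : 0 < e by rewrite lt_def e_neq0.
have [b0|b_neq0] := eqVneq b 0.
  by move: cross; rewrite b0 mulr0 leNgt mulr_gt0.
have b_gt0 : 0 < b by rewrite lt_def b_neq0.
by rewrite lee_fin ler_pdivrMr // mulrAC ler_pdivlMr // mulrC.
Qed.

Theorem lemma3p4 (R : realType) (d : measure_display) (T : measurableType d)
  (P : probability T R) (K M : nat) (alpha : 'I_(K + K * M) -> T -> R)
  (mu : 'I_M -> R) (PST : 'I_K -> R) :
  (forall i, measurable_fun setT (alpha i)) ->
  (forall i w, 0 <= alpha i w) ->
  mutually_independent P alpha ->
  continuous (joint_cdf P alpha) ->
  (forall x, differentiable (joint_cdf P alpha) x) ->
  (forall m, 0 <= mu m) ->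
  (forall k, 0 < PST k) ->
  {ae P, forall w,
    forall p : 'I_K -> R,
      is_optimal (fun k => chan_h alpha k w) (fun k m => chan_g alpha k m w) mu PST p ->
      forall i j : 'I_K, 0 < p i -> p j = 0 ->
        (eratio (chan_h alpha j w) (\sum_(m < M) mu m * chan_g alpha j m w)
         <= eratio (chan_h alpha i w) (\sum_(m < M) mu m * chan_g alpha i m w))%E}.
Proof.
move=> m_alpha alpha_ge0 _ cdf_cont _ mu_ge0 PST_gt0.
have alpha_gt0 : \forall w \ae P, forall a, 0 < alpha a w.
  by apply: filter_forall => a; exact: (ae_coord_gt0 m_alpha alpha_ge0 cdf_cont).
apply: filterS alpha_gt0 => w alpha_gt0 p opt i j pi_gt0 pj0.
have cost_ge0 k : 0 <= \sum_(m < M) mu m * chan_g alpha k m w.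
  by apply: sumr_ge0 => m _; rewrite mulr_ge0 ?mu_ge0 ?alpha_ge0.
have h_gt0 k : 0 < chan_h alpha k w by exact: alpha_gt0.
apply: (eratio_le_cross (h_gt0 j) (cost_ge0 j) (cost_ge0 i)).
exact: (optimal_exchange (h_gt0 i) (h_gt0 j) (PST_gt0 j) opt pi_gt0 pj0).
Qed.
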